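(* Let $M,N>0$. Define a sequence $a^{(m)}=a^{(m)}(M,N)$ by $a^{(0)}=M$ and, for $m\ge1$, $$a^{(m)}=Nm\sum_{r=0}^{m-1}\binom{m-1}{r}a^{(r)}a^{(m-r-1)}+\frac{N}{m+1}\sum_{r=2}^{m-1}\binom{m+1}{r}a^{(r)}a^{(m-r+1)}.$$ Then $\sum_{m=0}^\infty a^{(m)}t^m/m!$ converges in a neighborhood of $t=0$ and its sum equals $$a(t)=\frac{M+t\left(M^2N+\frac{1}{2N}\right)-t\sqrt{\frac{1}{4N^2}-t\left(2M^3N+\frac{M}{N}\right)-t^2M^4N^2}}{t^2+1}.$$
   Context: An empty sum equals $0$. *)

From Stdlib Require Import Reals.
From Coquelicot Require Import Coquelicot.
Open Scope R_scope.

(* The recurrence defining a^(m)(M,N):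
   a 0 = M and, for m >= 1,
   a m = N m sum_{r=0}^{m-1} binom(m-1,r) a r a (m-r-1)
         + N/(m+1) sum_{r=2}^{m-1} binom(m+1,r) a r a (m-r+1).
   (sum_n_m f 2 (m-1) is the empty sum 0 when m-1 < 2.) *)
Definition is_a_seq (M N : R) (a : nat -> R) : Prop :=
  a 0%nat = M /\
  forall m : nat, (1 <= m)%nat ->
    a m = N * INR m * sum_n_m (fun r => Binomial.C (m - 1) r * a r * a (m - r - 1)%nat) 0 (m - 1)
          + N / INR (m + 1) *
            sum_n_m (fun r => Binomial.C (m + 1) r * a r * a (m - r + 1)%nat) 2 (m - 1).

Definition a_closed (M N t : R) : R :=
  (M + t * (M ^ 2 * N + 1 / (2 * N))
     - t * sqrt (1 / (4 * N ^ 2) - t * (2 * M ^ 3 * N + M / N) - t ^ 2 * M ^ 4 * N ^ 2))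
  / (t ^ 2 + 1).

(* With [b m = a m / m!], the recurrence says that [B(t) = \sum b m t^m] solves
   [B - M = N t B^2 + (N / t) (B - M - b 1 t)^2]. Completing the square, the series
   [H(t) = ((1 + t^2) B(t) - M - beta t) / t] satisfies [H^2 = D(t)], where [D] is the
   quadratic under the square root of [a_closed]; this is an identity between
   coefficients. Read coefficientwise, [H^2 = D] is a quadratic recursion for the
   coefficients of [H], and such recursions grow at most geometrically (by induction
   against the majorant [A R^n / (n + 1)^2], whose self-convolution is [O (R^n /
   (n + 1)^2)]). So [H] and [B] have positive radius of convergence. As
   [H(0) = - 1 / (2 N) < 0], near [0] we have [H = - sqrt D], and solving the linear
   relation between [B] and [H] yields [a_closed]. *)

From Stdlib Require Import Reals Lra Lia Arith.
From Coquelicot Require Import Coquelicot.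
Open Scope R_scope.

Lemma sum_n_m_Rplus (f g : nat -> R) (n m : nat) :
  sum_n_m (fun k => f k + g k) n m = sum_n_m f n m + sum_n_m g n m.
Proof. exact (sum_n_m_plus f g n m). Qed.

Lemma sum_n_m_Rmult_l (c : R) (f : nat -> R) (n m : nat) :
  sum_n_m (fun k => c * f k) n m = c * sum_n_m f n m.
Proof. exact (sum_n_m_mult_l c f n m). Qed.

Lemma sum_n_m_le_loc (f g : nat -> R) (n m : nat) :
  (forall k, (n <= k <= m)%nat -> f k <= g k) -> sum_n_m f n m <= sum_n_m g n m.
Proof.
  intros Hfg. destruct (le_lt_dec n m) as [Hnm | Hmn].
  - induction Hnm as [| m Hnm IH].
    + rewrite !sum_n_n. apply Hfg. lia.
    + rewrite !sum_n_Sm by lia. apply Rplus_le_compat.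
      * apply IH. intros k Hk. apply Hfg. lia.
      * apply Hfg. lia.
  - rewrite !sum_n_m_zero by lia. apply Rle_refl.
Qed.

Lemma sum_n_m_nonneg (f : nat -> R) (n m : nat) :
  (forall k, (n <= k <= m)%nat -> 0 <= f k) -> 0 <= sum_n_m f n m.
Proof.
  intros Hf. rewrite <- (Rmult_0_r (INR (S m - n))), <- sum_n_m_const.
  now apply sum_n_m_le_loc.
Qed.

Lemma sum_n_m_interior_le (f : nat -> R) (n : nat) :
  (forall k, 0 <= f k) -> sum_n_m f 1 (n - 1) <= sum_n_m f 0 n.
Proof.
  intros Hf. destruct n as [| n].
  - rewrite sum_n_m_zero, sum_n_n by lia. apply Hf.
  - rewrite (sum_Sn_m f 0), sum_n_Sm by lia. simpl. rewrite Nat.sub_0_r.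
    change plus with Rplus. pose proof (Hf O). pose proof (Hf (S n)). lra.
Qed.

Lemma sum_n_m_reflect (f : nat -> R) (n : nat) :
  sum_n_m (fun r => f (n - r)%nat) 0 n = sum_n_m f 0 n.
Proof.
  change (sum_n (fun r => f (n - r)%nat) n = sum_n f n).
  rewrite !sum_n_Reals. apply sum_f_R0_skip.
Qed.

Definition conv_sum (u : nat -> R) (lo hi n : nat) : R :=
  sum_n_m (fun r => u r * u (n - r)%nat) lo hi.

Lemma conv_sum_peel_ends (u : nat -> R) (n : nat) : (1 <= n)%nat ->
  conv_sum u 0 n n = 2 * (u O * u n) + conv_sum u 1 (n - 1) n.
Proof.
  intros Hn. destruct n as [| n]; [lia |]. unfold conv_sum.
  rewrite sum_Sn_m, sum_n_Sm by lia. simpl. rewrite Nat.sub_0_r, Nat.sub_diag.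
  change plus with Rplus. ring.
Qed.

Lemma is_series_finite (u : nat -> R) (d : nat) :
  (forall n, (d < n)%nat -> u n = 0) -> is_series u (sum_n u d).
Proof.
  intros Hu. apply (filterlim_ext_loc (fun _ => sum_n u d)).
  - exists d. intros n Hn. induction Hn as [| n Hn IH]; [reflexivity |].
    rewrite sum_Sn, <- IH, (Hu (S n)) by lia. symmetry. apply Rplus_0_r.
  - apply filterlim_const.
Qed.

Lemma is_pseries_finite (c : nat -> R) (d : nat) (x : R) :
  (forall n, (d < n)%nat -> c n = 0) ->
  is_pseries c x (sum_n (fun n => c n * x ^ n) d).
Proof.
  intros Hc. unfold is_pseries.
  rewrite (sum_n_ext _ (fun n => scal (pow_n x n) (c n))).
  - apply is_series_finite. intros n Hn. rewrite Hc by lia. apply Rmult_0_r.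
  - intros n. rewrite (pow_n_pow x n). apply Rmult_comm.
Qed.

Lemma sum_n_two (f : nat -> R) : sum_n f 2 = f O + f 1%nat + f 2%nat.
Proof. rewrite !sum_Sn, sum_O. reflexivity. Qed.

Lemma CV_radius_ge_inv_of_geometric (u : nat -> R) (K R : R) : 0 < R ->
  (forall n, Rabs (u n) <= K * R ^ n) -> Rbar_le (/ R) (CV_radius u).
Proof.
  intros HR Hu. apply (proj1 (CV_radius_bounded u)).
  exists K. intros n.
  rewrite Rabs_mult, <- RPow_abs, (Rabs_pos_eq (/ R)), pow_inv
    by (left; apply Rinv_0_lt_compat, HR).
  pose proof (pow_lt R n HR).
  apply (Rmult_le_reg_r (R ^ n)); [assumption |].
  rewrite Rmult_assoc, Rinv_l by lra. rewrite Rmult_1_r. apply Hu.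
Qed.

Definition weight (n : nat) : R := / INR (S n) ^ 2.

Lemma weight_pos (n : nat) : 0 < weight n.
Proof. apply Rinv_0_lt_compat, pow_lt, lt_0_INR. lia. Qed.

Lemma weight_le_1 (n : nat) : weight n <= 1.
Proof.
  unfold weight. rewrite <- Rinv_1. apply Rinv_le_contravar; [lra |].
  pose proof (pos_INR n). rewrite S_INR. nra.
Qed.

Lemma sum_weight_le (n : nat) : sum_n_m weight 0 n <= 2 - / INR (S n).
Proof.
  induction n as [| n IH].
  - rewrite sum_n_n. unfold weight. simpl. lra.
  - rewrite sum_n_Sm by lia. change plus with Rplus.
    enough (weight (S n) <= / INR (S n) - / INR (S (S n))) by lra.
    unfold weight. rewrite !S_INR. pose proof (pos_INR n).
    replace (/ (INR n + 1) - / (INR n + 1 + 1))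
      with (/ ((INR n + 1) * (INR n + 1 + 1))) by (field; lra).
    apply Rinv_le_contravar; nra.
Qed.

(* Because [z^2 <= (x + y)^2 <= 2 (x^2 + y^2)]. *)
Lemma inv_sq_mul_le (x y z : R) : 0 < x -> 0 < y -> 0 < z -> z <= x + y ->
  / (x ^ 2 * y ^ 2) <= 2 * / z ^ 2 * (/ x ^ 2 + / y ^ 2).
Proof.
  intros Hx Hy Hz Hxyz.
  assert (Hx2 : 0 < x ^ 2) by (apply pow_lt; lra).
  assert (Hy2 : 0 < y ^ 2) by (apply pow_lt; lra).
  assert (Hz2 : 0 < z ^ 2) by (apply pow_lt; lra).
  replace (2 * / z ^ 2 * (/ x ^ 2 + / y ^ 2))
    with (2 * (x ^ 2 + y ^ 2) / z ^ 2 * / (x ^ 2 * y ^ 2)) by (field; lra).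
  rewrite <- (Rmult_1_l (/ (x ^ 2 * y ^ 2))) at 1.
  apply Rmult_le_compat_r; [left; apply Rinv_0_lt_compat; nra |].
  apply (Rmult_le_reg_r (z ^ 2)); [assumption |].
  unfold Rdiv. rewrite Rmult_assoc, Rinv_l, Rmult_1_l, Rmult_1_r by lra.
  assert (z ^ 2 <= (x + y) ^ 2) by (apply pow_incr; lra).
  pose proof (pow2_ge_0 (x - y)). nra.
Qed.

Lemma weight_conv_le (n : nat) :
  sum_n_m (fun r => weight r * weight (n - r)%nat) 0 n <= 8 * weight n.
Proof.
  apply Rle_trans with
    (sum_n_m (fun r => 2 * weight n * (weight r + weight (n - r)%nat)) 0 n).
  - apply sum_n_m_le_loc. intros r Hr. unfold weight.
    rewrite <- Rinv_mult. apply inv_sq_mul_le; try (apply lt_0_INR; lia).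
    rewrite <- plus_INR. apply le_INR. lia.
  - rewrite sum_n_m_Rmult_l, sum_n_m_Rplus, sum_n_m_reflect.
    pose proof (sum_weight_le n). pose proof (weight_pos n).
    assert (0 < / INR (S n)) by (apply Rinv_0_lt_compat, lt_0_INR; lia).
    nra.
Qed.

Lemma succ_le_pow2 (n : nat) : INR (S n) <= 2 ^ n.
Proof.
  induction n as [| n IH]; [simpl; lra |].
  change (2 ^ S n) with (2 * 2 ^ n). rewrite !S_INR in *. pose proof (pos_INR n). lra.
Qed.

Lemma sq_succ_le_pow4 (n : nat) : INR (S n) ^ 2 <= 4 ^ n.
Proof.
  replace 4 with (2 * 2) by ring. rewrite Rpow_mult_distr, <- Rsqr_pow2.
  apply Rsqr_incr_1; [apply succ_le_pow2 | apply pos_INR | apply pow_le; lra].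
Qed.

Section QuadraticRecursion.

Variables (N C rho : R) (u d : nat -> R).
Hypotheses (hN : 0 < N) (hC : 0 <= C) (hrho : 0 <= rho).
Hypothesis hd : forall n, (1 <= n)%nat -> Rabs (d n) <= C * rho ^ n.
Hypothesis hu : forall n, (1 <= n)%nat ->
  u n = N * (conv_sum u 1 (n - 1) n - d n).

Definition qr_radius : R := 4 * (1 + rho) * (1 + 32 * N ^ 2 * C).

Lemma qr_radius_ge_1 : 1 <= qr_radius.
Proof. unfold qr_radius. pose proof (Rmult_le_pos _ _ (pow2_ge_0 N) hC). nra. Qed.

Lemma qr_forcing_le (n : nat) : (1 <= n)%nat ->
  N * (C * rho ^ n) <= / (16 * N) * qr_radius ^ n * weight n / 2.
Proof.
  intros Hn.
  assert (HS : 0 < INR (S n)) by (apply lt_0_INR; lia).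
  assert (Hkey : 32 * N ^ 2 * C * rho ^ n * INR (S n) ^ 2 <= qr_radius ^ n).
  { unfold qr_radius. rewrite !Rpow_mult_distr.
    assert (H32 : 0 <= 32 * N ^ 2 * C) by (pose proof (pow2_ge_0 N); nra).
    assert (32 * N ^ 2 * C <= (1 + 32 * N ^ 2 * C) ^ n).
    { apply Rle_trans with ((1 + 32 * N ^ 2 * C) ^ 1); [simpl; lra |].
      apply Rle_pow; [lra | assumption]. }
    assert (rho ^ n <= (1 + rho) ^ n) by (apply pow_incr; lra).
    pose proof (sq_succ_le_pow4 n). pose proof (pow_le rho n hrho).
    apply Rle_trans
      with ((1 + 32 * N ^ 2 * C) ^ n * (1 + rho) ^ n * 4 ^ n); [| right; ring].
    apply Rmult_le_compat; [apply Rmult_le_pos; assumption | apply pow2_ge_0 | |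
      assumption].
    apply Rmult_le_compat; assumption. }
  replace (/ (16 * N) * qr_radius ^ n * weight n / 2)
    with (qr_radius ^ n / (32 * N * INR (S n) ^ 2)) by (unfold weight; field; lra).
  replace (N * (C * rho ^ n))
    with (32 * N ^ 2 * C * rho ^ n * INR (S n) ^ 2 / (32 * N * INR (S n) ^ 2))
    by (field; lra).
  apply Rmult_le_compat_r; [| assumption].
  left. apply Rinv_0_lt_compat. pose proof (pow_lt _ 2 HS). nra.
Qed.

(* The amplitude [/ (16 N)] is chosen so that the quadratic term, bounded through
   [weight_conv_le], uses half of the budget; [qr_forcing_le] covers the other half. *)
Lemma qr_weighted_bound (n : nat) : (1 <= n)%nat ->
  Rabs (u n) <= / (16 * N) * qr_radius ^ n * weight n.
Proof.
  induction n as [n IH] using lt_wf_ind. intros Hn.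
  pose proof (hd n Hn) as Hdn. pose proof (qr_forcing_le n Hn) as Hforce.
  set (A := / (16 * N)) in *. set (R := qr_radius) in *.
  assert (HA : 0 < A) by (apply Rinv_0_lt_compat; lra).
  assert (HR : 0 < R) by (pose proof qr_radius_ge_1; unfold R; lra).
  assert (Hconv : Rabs (conv_sum u 1 (n - 1) n) <= A ^ 2 * R ^ n * (8 * weight n)).
  { unfold conv_sum. eapply Rle_trans; [apply (norm_sum_n_m (V := R_NormedModule)) |].
    apply Rle_trans with
      (sum_n_m (fun r => A ^ 2 * R ^ n * (weight r * weight (n - r)%nat)) 1 (n - 1)).
    - apply sum_n_m_le_loc. intros r Hr.
      change norm with Rabs. rewrite Rabs_mult.
      replace (A ^ 2 * R ^ n * (weight r * weight (n - r)%nat))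
        with ((A * R ^ r * weight r) * (A * R ^ (n - r) * weight (n - r)%nat)).
      + apply Rmult_le_compat; try apply Rabs_pos; apply IH; lia.
      + replace n with (r + (n - r))%nat at 3 by lia. rewrite pow_add. ring.
    - rewrite sum_n_m_Rmult_l. apply Rmult_le_compat_l.
      + pose proof (pow_lt R n HR). nra.
      + eapply Rle_trans; [apply sum_n_m_interior_le | apply weight_conv_le].
        intros k. pose proof (weight_pos k). pose proof (weight_pos (n - k)). nra. }
  rewrite hu by assumption. rewrite Rabs_mult, (Rabs_pos_eq N) by lra.
  eapply Rle_trans.
  { apply Rmult_le_compat_l; [lra |]. apply Rabs_triang. }
  rewrite Rabs_Ropp.
  assert (N * (A ^ 2 * R ^ n * (8 * weight n)) = A * R ^ n * weight n / 2)
    by (unfold A; field; lra).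
  assert (N * Rabs (d n) <= N * (C * rho ^ n)) by (apply Rmult_le_compat_l; lra).
  assert (N * Rabs (conv_sum u 1 (n - 1) n)
          <= N * (A ^ 2 * R ^ n * (8 * weight n))) by (apply Rmult_le_compat_l; lra).
  lra.
Qed.

Lemma qr_geometric_bound : exists K R, 1 <= R /\ forall n, Rabs (u n) <= K * R ^ n.
Proof.
  exists (Rabs (u O) + / (16 * N)), qr_radius. split; [apply qr_radius_ge_1 |].
  assert (HA : 0 < / (16 * N)) by (apply Rinv_0_lt_compat; lra).
  intros [| n].
  - simpl. lra.
  - pose proof (qr_weighted_bound (S n) ltac:(lia)).
    pose proof (weight_le_1 (S n)). pose proof (weight_pos (S n)).
    pose proof (pow_le _ (S n) (Rle_trans _ _ _ Rle_0_1 qr_radius_ge_1)).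
    pose proof (Rabs_pos (u O)).
    assert (/ (16 * N) * qr_radius ^ S n * weight (S n) <= / (16 * N) * qr_radius ^ S n).
    { rewrite <- (Rmult_1_r (/ (16 * N) * qr_radius ^ S n)) at 2.
      apply Rmult_le_compat_l; nra. }
    nra.
Qed.

End QuadraticRecursion.

Lemma a_closed_of_quadratic (M N t S H : R) : 0 < N -> H < 0 ->
  S * (1 + t ^ 2) = M + (M ^ 2 * N + 1 / (2 * N)) * t + t * H ->
  H ^ 2 = 1 / (4 * N ^ 2) - t * (2 * M ^ 3 * N + M / N) - t ^ 2 * M ^ 4 * N ^ 2 ->
  a_closed M N t = S.
Proof.
  intros HN HH Hlin Hsq. unfold a_closed.
  rewrite <- Hsq. replace (H ^ 2) with ((- H) ^ 2) by ring.
  rewrite sqrt_pow2 by lra.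
  replace (M + t * (M ^ 2 * N + 1 / (2 * N)) - t * - H)
    with (S * (1 + t ^ 2)) by (rewrite Hlin; ring).
  pose proof (pow2_ge_0 t). field. lra.
Qed.

Section Recurrence.

Variables (M N : R) (a : nat -> R).
Hypotheses (hM : 0 < M) (hN : 0 < N) (ha : is_a_seq M N a).

Definition b (m : nat) : R := a m / INR (Factorial.fact m).

Lemma b_0 : b O = M.
Proof. unfold b. rewrite (proj1 ha). simpl. field. Qed.

Lemma b_succ (k : nat) :
  b (S k) = N * conv_sum b 0 k k + N * conv_sum b 2 k (S (S k)).
Proof.
  assert (Hfact : forall n, INR (Factorial.fact n) <> 0) by apply INR_fact_neq_0.
  assert (Hbinom : forall n r, (r <= n)%nat ->
            Binomial.C n r * a r * a (n - r)%nat
            = INR (Factorial.fact n) * (b r * b (n - r)%nat)).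
  { intros n r Hr. unfold Binomial.C, b.
    pose proof (Hfact n). pose proof (Hfact r). pose proof (Hfact (n - r)%nat).
    field. auto. }
  pose proof (proj2 ha (S k) ltac:(lia)) as Ha.
  replace (S k - 1)%nat with k in Ha by lia.
  replace (S k + 1)%nat with (S (S k)) in Ha by lia.
  rewrite (sum_n_m_ext_loc (fun r => Binomial.C k r * a r * a (S k - r - 1)%nat)
             (fun r => INR (Factorial.fact k) * (b r * b (k - r)%nat)))
    in Ha by (intros r Hr; replace (S k - r - 1)%nat with (k - r)%nat by lia;
              apply Hbinom; lia).
  rewrite (sum_n_m_ext_loc (fun r => Binomial.C (S (S k)) r * a r * a (S k - r + 1)%nat)
             (fun r => INR (Factorial.fact (S (S k))) * (b r * b (S (S k) - r)%nat)))
    in Ha by (intros r Hr; replace (S k - r + 1)%nat with (S (S k) - r)%nat by lia;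
              apply Hbinom; lia).
  rewrite !sum_n_m_Rmult_l in Ha.
  unfold b at 1. rewrite Ha. unfold conv_sum.
  change (Factorial.fact (S (S k))) with (S (S k) * (S k * Factorial.fact k))%nat.
  change (Factorial.fact (S k)) with (S k * Factorial.fact k)%nat.
  rewrite !mult_INR.
  pose proof (Hfact k).
  assert (INR (S k) <> 0) by (apply not_0_INR; lia).
  assert (INR (S (S k)) <> 0) by (apply not_0_INR; lia).
  field. auto.
Qed.

Lemma b_nonneg (m : nat) : 0 <= b m.
Proof.
  induction m as [m IH] using lt_wf_ind.
  destruct m as [| k]; [rewrite b_0; lra |].
  rewrite b_succ. unfold conv_sum.
  apply Rplus_le_le_0_compat; apply Rmult_le_pos; try lra;
    apply sum_n_m_nonneg; intros r Hr; apply Rmult_le_pos; apply IH; lia.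
Qed.

Lemma b_1 : b 1 = N * M ^ 2.
Proof.
  rewrite b_succ. unfold conv_sum. rewrite sum_n_n, sum_n_m_zero by lia.
  simpl. rewrite b_0. change zero with 0. ring.
Qed.

Lemma b_2 : b 2 = 2 * N ^ 2 * M ^ 3.
Proof.
  rewrite b_succ. unfold conv_sum. rewrite (sum_n_m_zero _ 2 1) by lia.
  rewrite sum_Sn_m, sum_n_n by lia. change zero with 0. change plus with Rplus.
  simpl. rewrite b_0, b_1. ring.
Qed.

Lemma b_3 : b 3 = 5 * N ^ 3 * M ^ 4 + 4 * N ^ 5 * M ^ 6.
Proof.
  rewrite b_succ. unfold conv_sum. rewrite (sum_n_n _ 2).
  rewrite sum_Sn_m, sum_Sn_m, sum_n_n by lia. change plus with Rplus.
  simpl. rewrite b_0, b_1, b_2. ring.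
Qed.

Definition beta : R := M ^ 2 * N + 1 / (2 * N).

(* The coefficients of [((1 + t^2) B(t) - M - beta t) / t], where [B] is the
   generating function of [b]. *)
Definition h (m : nat) : R :=
  match m with
  | O => b 1 - beta
  | S k => b (S (S k)) + b k
  end.

Definition disc (m : nat) : R :=
  match m with
  | O => 1 / (4 * N ^ 2)
  | 1%nat => - (2 * M ^ 3 * N + M / N)
  | 2%nat => - (M ^ 4 * N ^ 2)
  | _ => 0
  end.

Lemma h_0 : h O = - / (2 * N).
Proof. simpl. rewrite b_1. unfold beta. field. lra. Qed.

Lemma h_conv_interior (p : nat) :
  conv_sum h 1 (S p) (S (S p))
  = conv_sum b 2 (S (S p)) (S (S (S (S p)))) + conv_sum b 2 (S (S p)) (S (S p))
    + conv_sum b 0 p (S (S p)) + conv_sum b 0 p p.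
Proof.
  unfold conv_sum. rewrite <- sum_n_m_S.
  rewrite (sum_n_m_ext_loc _ (fun s =>
      b (S (S s)) * b (S (S (S (S p))) - S (S s))%nat
      + b (S (S s)) * b (S (S p) - S (S s))%nat
      + b s * b (S (S p) - s)%nat + b s * b (p - s)%nat)).
  2: { intros s Hs.
       replace (S (S p) - S s)%nat with (S (p - s)) by lia.
       replace (S (S (S (S p))) - S (S s))%nat with (S (S (p - s))) by lia.
       replace (S (S p) - S (S s))%nat with (p - s)%nat by lia.
       replace (S (S p) - s)%nat with (S (S (p - s))) by lia.
       simpl. ring. }
  rewrite !sum_n_m_Rplus. unfold conv_sum. now rewrite <- !sum_n_m_S.
Qed.

(* Since [2 h 0 = - / N], the end terms [2 h 0 h (p + 2)] equal
   [- (b (p + 3) + b (p + 1)) / N]; the recurrences for these two coefficients cancel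
   the four convolutions of [h_conv_interior]. *)
Lemma h_sqr_high (p : nat) : (1 <= p)%nat ->
  conv_sum h 0 (S (S p)) (S (S p)) = 0.
Proof.
  intros Hp.
  rewrite conv_sum_peel_ends by lia.
  replace (S (S p) - 1)%nat with (S p) by lia. rewrite h_conv_interior.
  assert (Htop : conv_sum b 2 (S (S p)) (S (S p))
                 = conv_sum b 2 p (S (S p)) + b (S p) * b 1 + b (S (S p)) * b O).
  { unfold conv_sum. rewrite !sum_n_Sm by lia. change plus with Rplus.
    rewrite Nat.sub_diag. replace (S (S p) - S p)%nat with 1%nat by lia. ring. }
  assert (Hbot : conv_sum b 0 p (S (S p))
                 = b O * b (S (S p)) + b 1 * b (S p) + conv_sum b 2 p (S (S p))).
  { unfold conv_sum. rewrite sum_Sn_m, sum_Sn_m by lia. change plus with Rplus.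
    replace (S (S p) - 0)%nat with (S (S p)) by lia.
    replace (S (S p) - 1)%nat with (S p) by lia. ring. }
  assert (Hfull : conv_sum b 0 (S (S p)) (S (S p))
                  = b O * b (S (S p)) + b 1 * b (S p) + conv_sum b 2 (S (S p)) (S (S p))).
  { unfold conv_sum. rewrite sum_Sn_m, sum_Sn_m by lia. change plus with Rplus.
    replace (S (S p) - 0)%nat with (S (S p)) by lia.
    replace (S (S p) - 1)%nat with (S p) by lia. ring. }
  change (h (S (S p))) with (b (S (S (S p))) + b (S p)).
  rewrite h_0, (b_succ (S (S p))), Hfull, Htop, Hbot, (b_succ p).
  field. lra.
Qed.

Lemma h_sqr (n : nat) : conv_sum h 0 n n = disc n.
Proof.
  unfold conv_sum. destruct n as [| [| [| q]]].
  - rewrite sum_n_n. simpl. rewrite b_1. unfold beta. field. lra.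
  - rewrite sum_Sn_m, sum_n_n by lia. change plus with Rplus. simpl.
    rewrite b_0, b_1, b_2. unfold beta. field. lra.
  - rewrite sum_Sn_m, sum_Sn_m, sum_n_n by lia. change plus with Rplus. simpl.
    rewrite b_0, b_1, b_2, b_3. unfold beta. field. lra.
  - apply (h_sqr_high (S q)). lia.
Qed.

Lemma h_rec (n : nat) : (1 <= n)%nat ->
  h n = N * (conv_sum h 1 (n - 1) n - disc n).
Proof.
  intros Hn. rewrite <- h_sqr, conv_sum_peel_ends, h_0 by assumption. field. lra.
Qed.

Lemma disc_bound (n : nat) : (1 <= n)%nat ->
  Rabs (disc n) <= (Rabs (disc 1) + Rabs (disc 2)) * 1 ^ n.
Proof.
  intros Hn. rewrite pow1, Rmult_1_r.
  pose proof (Rabs_pos (disc 1)). pose proof (Rabs_pos (disc 2)).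
  destruct n as [| [| [| n]]]; try lia; try lra.
  change (disc (S (S (S n)))) with 0. rewrite Rabs_R0. lra.
Qed.

Lemma h_geometric : exists K R, 1 <= R /\ forall n, Rabs (h n) <= K * R ^ n.
Proof.
  apply (qr_geometric_bound N (Rabs (disc 1) + Rabs (disc 2)) 1 h disc hN).
  - pose proof (Rabs_pos (disc 1)). pose proof (Rabs_pos (disc 2)). lra.
  - lra.
  - exact disc_bound.
  - exact h_rec.
Qed.

(* [b (n + 2) = h (n + 1) - b n <= h (n + 1)], as [b] is nonnegative. *)
Lemma b_geometric : exists K R, 1 <= R /\ forall n, Rabs (b n) <= K * R ^ n.
Proof.
  destruct h_geometric as (K & R & HR & Hh).
  assert (HK : 0 <= K)
    by (pose proof (Hh O); pose proof (Rabs_pos (h O)); simpl in *; lra).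
  assert (HNM : 0 <= N * M ^ 2) by (pose proof (pow2_ge_0 M); nra).
  exists (M + N * M ^ 2 + K), R. split; [assumption |].
  intros n. rewrite Rabs_pos_eq by apply b_nonneg.
  destruct n as [| [| k]].
  - rewrite b_0. simpl. lra.
  - rewrite b_1. simpl. nra.
  - assert (Hk : b (S (S k)) = h (S k) - b k) by (simpl; ring).
    pose proof (b_nonneg k). pose proof (Rle_abs (h (S k))). pose proof (Hh (S k)).
    assert (R ^ S k <= R ^ S (S k)) by (apply Rle_pow; [lra | lia]).
    pose proof (pow_le R (S (S k)) ltac:(lra)).
    nra.
Qed.

Lemma b_h_series_linear (t S H : R) : is_pseries b t S -> is_pseries h t H ->
  S * (1 + t ^ 2) = M + beta * t + t * H.
Proof.
  intros HS HH.
  set (lin := fun n => match n with O => M | 1%nat => beta | _ => 0 end).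
  assert (Hlin : is_pseries lin t (sum_n (fun n => lin n * t ^ n) 1)).
  { apply is_pseries_finite. intros [| [| n]] Hn; [lia | lia | reflexivity]. }
  assert (Hcoef : forall n, PS_plus (PS_incr_1 h) lin n = PS_plus b (PS_incr_n b 2) n).
  { intros [| [| n]]; unfold PS_plus, PS_incr_1, lin; simpl;
      change plus with Rplus; change zero with 0.
    - rewrite b_0. ring.
    - unfold beta. ring.
    - ring. }
  pose proof (is_pseries_ext _ _ _ _ Hcoef
                (is_pseries_plus _ _ _ _ _ (is_pseries_incr_1 h t H HH) Hlin)) as Hrhs.
  pose proof (is_pseries_plus _ _ _ _ _ HS (is_pseries_incr_n b 2 t S HS)) as Hlhs.
  apply is_pseries_unique in Hrhs. apply is_pseries_unique in Hlhs.
  rewrite Hlhs in Hrhs. revert Hrhs.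
  rewrite sum_Sn, sum_O. unfold lin. simpl.
  change plus with Rplus. change scal with Rmult. change mult with Rmult.
  change one with 1.
  intros E. simpl in E. lra.
Qed.

Lemma h_series_sqr (t H : R) : Rbar_lt (Rabs t) (CV_radius h) -> is_pseries h t H ->
  H ^ 2 = disc 0 + disc 1 * t + disc 2 * t ^ 2.
Proof.
  intros Ht HH.
  assert (Hcoef : forall n, disc n = PS_mult h h n).
  { intros n. unfold PS_mult. rewrite <- sum_n_Reals. symmetry. apply h_sqr. }
  pose proof (is_pseries_ext _ _ _ _ Hcoef (is_pseries_finite disc 2 t ltac:(
    intros [| [| [| n]]] Hn; [lia | lia | lia | reflexivity]))) as Hdisc.
  pose proof (is_pseries_mult h h t H H HH HH Ht Ht) as Hsq.
  apply is_pseries_unique in Hdisc. apply is_pseries_unique in Hsq.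
  rewrite Hdisc in Hsq. transitivity (H * H); [ring |].
  rewrite <- Hsq, sum_n_two, pow_O, pow_1. ring.
Qed.

Lemma CV_radius_b_h_pos : exists r : R, 0 < r /\
  Rbar_le r (CV_radius b) /\ Rbar_le r (CV_radius h).
Proof.
  destruct b_geometric as (Kb & Rb & HRb & Hb).
  destruct h_geometric as (Kh & Rh & HRh & Hh).
  exists (Rmin (/ Rb) (/ Rh)). repeat split.
  - apply Rmin_glb_lt; apply Rinv_0_lt_compat; lra.
  - eapply Rbar_le_trans; [| apply (CV_radius_ge_inv_of_geometric b Kb Rb); auto; lra].
    apply Rmin_l.
  - eapply Rbar_le_trans; [| apply (CV_radius_ge_inv_of_geometric h Kh Rh); auto; lra].
    apply Rmin_r.
Qed.

Lemma PSeries_h_neg_near_0 : exists delta : R, 0 < delta /\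
  forall t : R, Rabs t < delta -> PSeries h t < 0.
Proof.
  destruct CV_radius_b_h_pos as (r & Hr & _ & Hrad).
  assert (Hcont : continuity_pt (PSeries h) 0).
  { apply PSeries_continuity. rewrite Rabs_R0.
    eapply Rbar_lt_le_trans; [| exact Hrad]. exact Hr. }
  assert (Hpos : 0 < / (2 * N)) by (apply Rinv_0_lt_compat; lra).
  destruct (proj1 (continuity_pt_locally _ _) Hcont (mkposreal _ Hpos)) as [delta Hdelta].
  exists delta. split; [apply cond_pos |]. intros t Ht.
  assert (Hball : ball 0 delta t)
    by (change (Rabs (t - 0) < delta); rewrite Rminus_0_r; exact Ht).
  specialize (Hdelta t Hball). simpl in Hdelta.
  rewrite PSeries_0, h_0 in Hdelta. apply Rabs_def2 in Hdelta. lra.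
Qed.

Lemma b_series_closed_form : exists rho : R, 0 < rho /\
  forall t : R, Rabs t < rho -> is_pseries b t (a_closed M N t).
Proof.
  destruct CV_radius_b_h_pos as (r & Hr & Hrad_b & Hrad_h).
  destruct PSeries_h_neg_near_0 as (delta & Hdelta & Hneg).
  exists (Rmin r delta). split; [apply Rmin_glb_lt; assumption |]. intros t Ht.
  assert (Htr : Rabs t < r) by (eapply Rlt_le_trans; [exact Ht | apply Rmin_l]).
  assert (Ht_b : Rbar_lt (Rabs t) (CV_radius b))
    by (apply (Rbar_lt_le_trans _ r); [exact Htr | exact Hrad_b]).
  assert (Ht_h : Rbar_lt (Rabs t) (CV_radius h))
    by (apply (Rbar_lt_le_trans _ r); [exact Htr | exact Hrad_h]).
  pose proof (PSeries_correct _ _ (CV_radius_inside _ _ Ht_b)) as HS.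
  pose proof (PSeries_correct _ _ (CV_radius_inside _ _ Ht_h)) as HH.
  rewrite (a_closed_of_quadratic M N t (PSeries b t) (PSeries h t) hN).
  - exact HS.
  - apply Hneg. eapply Rlt_le_trans; [exact Ht | apply Rmin_r].
  - exact (b_h_series_linear _ _ _ HS HH).
  - rewrite (h_series_sqr _ _ Ht_h HH). simpl. field. lra.
Qed.

End Recurrence.

Theorem lemma5 (M N : R) (a : nat -> R) (hM : 0 < M) (hN : 0 < N)
  (ha : is_a_seq M N a) :
  exists rho : R, 0 < rho /\
    forall t : R, Rabs t < rho ->
      is_series (fun m : nat => a m * t ^ m / INR (Factorial.fact m)) (a_closed M N t).
Proof.
  destruct (b_series_closed_form M N a hM hN ha) as (rho & Hrho & Hser).
  exists rho. split; [exact Hrho |]. intros t Ht.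
  eapply is_series_ext; [| exact (Hser t Ht)].
  intros m.
  change (pow_n (K := R_Ring) t m * b a m = a m * t ^ m / INR (Factorial.fact m)).
  rewrite pow_n_pow. unfold b. field. apply INR_fact_neq_0.
Qed.
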